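(* Let $G$, $K$, the faces $F_1,\dots,F_c$, the domain $\mathcal{D}_G$, the functions $\mathcal{A}_k$ and the sets $\mathcal{Q}(\vec q)$ be as in the context, and fix $\vec q=(q_1,\dots,q_c)\in\mathbb{Z}^c$. For every $\vec\varepsilon\in\mathcal{Q}(\vec q)$ there is a configuration $\theta\in\mathbb{R}^n$, unique up to the equivalence described in the context, such that for every edge $e$ and every bounded face $F_k$ whose counterclockwise boundary traversal passes through $e$ from vertex $a$ to vertex $b$, one has $\Delta_{ab}=\delta_k(e;\vec\varepsilon)$. This configuration is a stable fixed point with all angle differences in $[-\pi/2,\pi/2]$ and with winding vector $\vec q$. The resulting map from $\mathcal{Q}(\vec q)$ to the set of (equivalence classes of) stable fixed points with all angle differences in $[-\pi/2,\pi/2]$ and winding vector $\vec q$ is a bijection.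
   Context: Let $G$ be a finite connected planar graph with vertices $1,\dots,n$ and $m$ edges, such that every edge of $G$ lies on at least one cycle of $G$, and fix a planar embedding of $G$. Let $F_1,\dots,F_c$ ($c=m-n+1$) be the bounded faces of the embedding; each edge borders exactly two faces (possibly one of them the unbounded one). For $k\neq \ell$ let $m_{k\ell}$ be the number of edges bordering both $F_k$ and $F_\ell$, let $m_k$ be the number of edges bordering $F_k$ and the unbounded face, and let $n_k=m_k+\sum_{\ell\neq k}m_{k\ell}$ be the number of edges on the boundary of $F_k$. Fix a coupling constant $K>0$ and consider the Kuramoto model $\dot\theta_i=-K\sum_{j\sim i}\sin(\theta_i-\theta_j)$, $i=1,\dots,n$ ($j\sim i$ means $j$ is adjacent to $i$). A fixed point is $\theta\in\mathbb{R}^n$ with $\sum_{j\sim i}\sin(\theta_i-\theta_j)=0$ for all $i$; two configurations are considered equal if they differ by adding one common constant to all $\theta_i$ and/or integer multiples of $2\pi$ to individual $\theta_i$. For adjacent $i,j$, $\Delta_{ij}$ denotes $\theta_i-\theta_j$ reduced modulo $2\pi$ into $(-\pi,\pi]$ (so $\Delta_{ji}=-\Delta_{ij}$ unless $\Delta_{ij}=\pi$). The stability matrix $M$ has entries $M_{ij}=K\cos(\theta_i-\theta_j)$ if $i\sim j$, $M_{ii}=-\sum_{k\sim i}K\cos(\theta_i-\theta_k)$, and $M_{ij}=0$ otherwise; a fixed point is stable if $M$ is negative semidefinite. The winding vector of a fixed point is $\vec q=(q_1,\dots,q_c)$, where $q_k=\frac{1}{2\pi}\sum \Delta_{ab}$,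 the sum running over the edges of the boundary of $F_k$ traversed counterclockwise, each edge traversed from $a$ to $b$; each $q_k$ is an integer. Define $\mathcal{D}_G=\{\vec\varepsilon\in\mathbb{R}^c: |\varepsilon_k|\le 1 \text{ whenever } m_k>0,\ |\varepsilon_k-\varepsilon_\ell|\le 1\text{ whenever } m_{k\ell}>0\}$. For $\vec\varepsilon\in\mathcal{D}_G$, an edge $e$ and a bounded face $F_k$ bordered by $e$, set $\delta_k(e;\vec\varepsilon)=\arcsin(\varepsilon_k)$ if the other face bordered by $e$ is the unbounded face and $\delta_k(e;\vec\varepsilon)=\arcsin(\varepsilon_k-\varepsilon_\ell)$ if it is $F_\ell$. Define $\mathcal{A}_k(\vec\varepsilon)=m_k\arcsin(\varepsilon_k)+\sum_{\ell\neq k}m_{k\ell}\arcsin(\varepsilon_k-\varepsilon_\ell)$ and, for $\vec q\in\mathbb{Z}^c$, $\mathcal{Q}(\vec q)=\{\vec\varepsilon\in\mathcal{D}_G:\mathcal{A}_k(\vec\varepsilon)=2\pi q_k\text{ for all }k=1,\dots,c\}$. *)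

From HB Require Import structures.
From mathcomp Require Import all_boot all_order all_algebra.
From mathcomp Require Import all_classical all_reals all_analysis.
Set Implicit Arguments. Unset Strict Implicit. Unset Printing Implicit Defensive.
Import Order.TTheory GRing.Theory Num.Theory.
Local Open Scope ring_scope.

(* Darts (oriented edges) are pairs (a,b) with adj a b.
   rot v u = the neighbour of v that follows u in CLOCKWISE order around v
   in the embedding.  The face permutation
       fperm (a,b) = (b, rot b a)
   then traces each face boundary with the face on its LEFT, i.e. bounded
   faces counterclockwise.
   lab labels the face orbits of fperm: None = unbounded face,
   Some k = bounded face F_k (k : 'I_c). *)

Section Graph.
Variable n : nat.
Implicit Types (adj : rel 'I_n).

Definition dart adj (d : 'I_n * 'I_n) : bool := adj d.1 d.2.

Definition medges adj : nat := #|[set d : 'I_n * 'I_n | dart adj d]| %/ 2.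

Definition fperm (rot : 'I_n -> 'I_n -> 'I_n) (d : 'I_n * 'I_n) : 'I_n * 'I_n :=
  (d.2, rot d.2 d.1).

Definition edge_on_cycle adj (u v : 'I_n) : Prop :=
  connect (fun x y => adj x y && ([set x; y] != [set u; v])) v u.

Definition plane_graph adj (rot : 'I_n -> 'I_n -> 'I_n) (c : nat)
    (lab : 'I_n * 'I_n -> option 'I_c) : Prop :=
  symmetric adj /\ irreflexive adj /\
  (forall u v, connect adj u v) /\
  (forall u v, adj u v -> edge_on_cycle adj u v) /\
  (forall v u, adj v u -> adj v (rot v u)) /\
  (forall v u w, adj v u -> adj v w -> fconnect (rot v) u w) /\
  (forall d d', dart adj d -> dart adj d' ->
      (lab d == lab d') = fconnect (fperm rot) d d') /\
  (forall o : option 'I_c, exists2 d, dart adj d & lab d = o) /\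
  (* Euler's formula  n - m + (c+1) = 2  (genus 0, i.e. planar) *)
  c + n = (medges adj).+1.

Definition rev (d : 'I_n * 'I_n) : 'I_n * 'I_n := (d.2, d.1).

End Graph.

Section Kuramoto.
Variable R : realType.
Variables (n c : nat) (adj : rel 'I_n) (lab : 'I_n * 'I_n -> option 'I_c).

Definition m_out (k : 'I_c) : nat :=
  #|[set d : 'I_n * 'I_n | dart adj d && (lab d == Some k) && (lab (rev d) == None)]|.
Definition m_between (k l : 'I_c) : nat :=
  #|[set d : 'I_n * 'I_n | dart adj d && (lab d == Some k) && (lab (rev d) == Some l)]|.
Definition n_bd (k : 'I_c) : nat :=
  #|[set d : 'I_n * 'I_n | dart adj d && (lab d == Some k)]|.

Definition in_DG (eps : 'I_c -> R) : Prop :=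
  (forall k, (0 < m_out k)%N -> `|eps k| <= 1) /\
  (forall k l, k != l -> (0 < m_between k l)%N -> `|eps k - eps l| <= 1).

Definition delta (eps : 'I_c -> R) (k : 'I_c) (d : 'I_n * 'I_n) : R :=
  match lab (rev d) with
  | None => asin (eps k)
  | Some l => asin (eps k - eps l)
  end.

Definition A_k (eps : 'I_c -> R) (k : 'I_c) : R :=
  (m_out k)%:R * asin (eps k)
  + \sum_(l < c | l != k) (m_between k l)%:R * asin (eps k - eps l).

Definition Qset (q : 'I_c -> int) (eps : 'I_c -> R) : Prop :=
  in_DG eps /\ forall k, A_k eps k = 2 * pi * (q k)%:~R.

(* reduction modulo 2 pi into (-pi, pi] *)
Definition wrap (x : R) : R :=
  x - 2 * pi * (Num.ceil ((x - pi) / (2 * pi)))%:~R.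

Definition Delta (theta : 'I_n -> R) (a b : 'I_n) : R := wrap (theta a - theta b).

Definition fixed_point (theta : 'I_n -> R) : Prop :=
  forall i, \sum_(j < n | adj i j) sin (theta i - theta j) = 0.

Definition stab_matrix (K : R) (theta : 'I_n -> R) : 'M[R]_n :=
  \matrix_(i, j)
    if i == j then - \sum_(k < n | adj i k) K * cos (theta i - theta k)
    else if adj i j then K * cos (theta i - theta j) else 0.

Definition neg_semidef (M : 'M[R]_n) : Prop :=
  forall x : 'cV[R]_n, (x^T *m M *m x) ord0 ord0 <= 0.

Definition stable_fp (K : R) (theta : 'I_n -> R) : Prop :=
  fixed_point theta /\ neg_semidef (stab_matrix K theta).

Definition small_angles (theta : 'I_n -> R) : Prop :=
  forall i j, adj i j -> `|Delta theta i j| <= pi / 2.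

Definition has_winding (theta : 'I_n -> R) (q : 'I_c -> int) : Prop :=
  forall k, \sum_(d : 'I_n * 'I_n | dart adj d && (lab d == Some k))
              Delta theta d.1 d.2 = 2 * pi * (q k)%:~R.

Definition config_equiv (theta theta' : 'I_n -> R) : Prop :=
  exists (C : R) (z : 'I_n -> int),
    forall i, theta' i = theta i + C + 2 * pi * (z i)%:~R.

Definition realizes (eps : 'I_c -> R) (theta : 'I_n -> R) : Prop :=
  forall (d : 'I_n * 'I_n) (k : 'I_c), dart adj d -> lab d = Some k ->
    Delta theta d.1 d.2 = delta eps k d.

End Kuramoto.

From Pilot Require Import Defs.
From HB Require Import structures.
From mathcomp Require Import all_boot all_order all_algebra.
From mathcomp Require Import all_classical all_reals all_analysis.
From mathcomp Require Import zify ring lra.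
Set Implicit Arguments. Unset Strict Implicit. Unset Printing Implicit Defensive.
Import Order.TTheory GRing.Theory Num.Theory.
Local Open Scope ring_scope.

(* Angle differences are 1-cochains on the plane graph.  Euler's formula makes
   the cellular cochain complex vertices -> edges -> faces exact in degree 1: an
   antisymmetric edge function with zero circulation around every bounded face is
   a coboundary theta_a - theta_b, and one with zero divergence at every vertex is
   a difference eps_left - eps_right of face values (0 on the unbounded face).
   For eps in Q(q) the cochain asin (eps_left - eps_right) has circulation
   2 pi q_k around F_k; correcting it by 2 pi times an integer cochain with the
   same circulations leaves a coboundary, which is the configuration theta.
   Conversely, at a fixed point with |Delta| <= pi/2 the currents
   sin (theta_a - theta_b) are divergence free, hence of that form, and the
   winding condition says that eps lies in Q(q).  Stability holds because the
   stability matrix is minus a graph Laplacian with nonnegative weights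
   K cos Delta. *)

Lemma periodicz (U V : zmodType) (f : U -> V) (T : U) :
  periodic f T -> forall (z : int) a, f (a + T *~ z) = f a.
Proof.
move=> fT [] k a; first exact: periodicn.
by rewrite NegzE mulrNz -[in RHS](subrK (T *+ k.+1) a) periodicn.
Qed.

Section Wrap.
Variable R : realType.
Implicit Types (x y : R) (z : int).

Lemma wrapE x : exists z, Defs.wrap x = x + 2 * pi * z%:~R.
Proof. by exists (- Num.ceil ((x - pi) / (2 * pi))); rewrite /Defs.wrap rmorphN mulrN. Qed.

Lemma sinD2piz x z : sin (x + 2 * pi * z%:~R) = sin x.
Proof. by rewrite mulrzr mulr_natl periodicz //; exact: sinD2pi. Qed.

Lemma cosD2piz x z : cos (x + 2 * pi * z%:~R) = cos x.
Proof. by rewrite mulrzr mulr_natl periodicz //; exact: cosD2pi. Qed.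

Lemma sin_wrap x : sin (Defs.wrap x) = sin x.
Proof. by have [z ->] := wrapE x; rewrite sinD2piz. Qed.

Lemma cos_wrap x : cos (Defs.wrap x) = cos x.
Proof. by have [z ->] := wrapE x; rewrite cosD2piz. Qed.

Lemma wrapD2piz x z : Defs.wrap (x + 2 * pi * z%:~R) = Defs.wrap x.
Proof.
have two_pi_neq0 : 2 * pi != 0 :> R by rewrite mulf_neq0 ?pnatr_eq0 // gt_eqF // pi_gt0.
rewrite /Defs.wrap.
have -> : (x + 2 * pi * z%:~R - pi) / (2 * pi) = (x - pi) / (2 * pi) + z%:~R.
  by rewrite addrAC mulrDl [2 * pi * _]mulrC -mulrA divff ?mulr1.
by rewrite ceilDrz ?intr_int // intrKceil rmorphD /=; ring.
Qed.

Lemma wrap_id x : - pi < x <= pi -> Defs.wrap x = x.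
Proof.
move=> /andP[x_gt x_le]; have pi_gt0 := pi_gt0 R; rewrite /Defs.wrap.
suff -> : Num.ceil ((x - pi) / (2 * pi)) = 0 by rewrite mulr0 subr0.
apply: ceil_def; rewrite sub0r rmorphN rmorph1 /= rmorph0.
by rewrite ltr_pdivlMr ?ler_pdivrMr ?mulr_gt0 //; apply/andP; split; lra.
Qed.

Lemma eq_wrap x y : Defs.wrap x = Defs.wrap y -> exists z, x - y = 2 * pi * z%:~R.
Proof.
have [[zx ex] [zy ey]] := (wrapE x, wrapE y); rewrite ex ey => exy.
by exists (zy - zx); rewrite rmorphB /=; lra.
Qed.

Lemma wrapN x : - pi < Defs.wrap x < pi -> Defs.wrap (- x) = - Defs.wrap x.
Proof.
move=> /andP[w_gt w_lt]; have [z ex] := wrapE x.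
have -> : - x = - Defs.wrap x + 2 * pi * z%:~R by rewrite ex; ring.
by rewrite wrapD2piz wrap_id //; apply/andP; split; lra.
Qed.

Lemma asin_bound x : `|x| <= 1 -> -(pi / 2) <= asin x <= pi / 2.
Proof. by rewrite ler_norml => hx; rewrite asin_geNpi2 ?asin_lepi2. Qed.

Lemma asinK_norm x : `|x| <= 1 -> sin (asin x) = x.
Proof. by rewrite ler_norml => hx; rewrite asinK // in_itv /=. Qed.

Lemma asin_inj_norm x y : `|x| <= 1 -> `|y| <= 1 -> asin x = asin y -> x = y.
Proof. by move=> hx hy exy; rewrite -[x]asinK_norm // -[y]asinK_norm // exy. Qed.

Lemma asinN x : `|x| <= 1 -> asin (- x) = - asin x.
Proof.
move=> hx; have /andP[lo hi] := asin_bound hx.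
by rewrite -{1}(asinK_norm hx) -sinN sinK // in_itv /=; apply/andP; split; lra.
Qed.

Lemma asin0 : asin 0 = 0 :> R.
Proof.
have pi_gt0 := pi_gt0 R.
by rewrite -{1}sin0 sinK // in_itv /=; apply/andP; split; lra.
Qed.

End Wrap.

Lemma Delta_config_equiv (R : realType) n (th th' : 'I_n -> R) :
  config_equiv th th' -> Delta th =2 Delta th'.
Proof.
move=> [C [z eq_th]] a b; rewrite /Delta !eq_th.
have -> : th a + C + 2 * pi * (z a)%:~R - (th b + C + 2 * pi * (z b)%:~R) =
          th a - th b + 2 * pi * (z a - z b)%:~R by rewrite rmorphB /=; ring.
by rewrite wrapD2piz.
Qed.

Lemma sum_mul_indicator (R : pzSemiRingType) (I : finType) (f : I -> R) a :
  \sum_i f i * (a == i)%:R = f a.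
Proof.
rewrite (bigD1 a) //= eqxx mulr1 big1 ?addr0 // => i ia.
by rewrite eq_sym (negbTE ia) mulr0.
Qed.

Lemma sum_mul_bool (R : pzSemiRingType) (I : finType) (P Q : pred I) (f : I -> R) :
  \sum_(i | P i) f i * (Q i)%:R = \sum_(i | P i && Q i) f i.
Proof. by rewrite [RHS]big_mkcondr; apply: eq_bigr => i _; rewrite mulr_natr mulrb. Qed.

Lemma sum_mul_count (R : pzSemiRingType) (I : finType) (P Q : pred I) (a : R) :
  \sum_(i | P i) a * (Q i)%:R = #|[set i | P i && Q i]|%:R * a.
Proof.
by rewrite sum_mul_bool mulr_natl -sumr_const; apply: eq_bigl => i; rewrite inE.
Qed.

Lemma connect_ind (T : finType) (e : rel T) (P : T -> Prop) :
  (forall x y, e x y -> P x -> P y) -> forall x y, connect e x y -> P x -> P y.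
Proof.
move=> eP x y /connectP[p e_p ->]; elim: p x e_p => //= z p IHp x /andP[exz e_p] Px.
exact: IHp e_p (eP _ _ exz Px).
Qed.

Lemma mxrank_ker_sub (F : fieldType) p q r (A : 'M[F]_(p, q)) (U : 'M[F]_(r, p)) :
  (forall v : 'rV_p, v *m A = 0 -> (v <= U)%MS) -> (p - \rank U <= \rank A)%N.
Proof.
move=> kerU; have : (kermx A <= U)%MS.
  by apply/row_subP => i; apply: kerU; apply/sub_kermxP; rewrite row_sub.
by move/mxrankS; rewrite mxrank_ker; lia.
Qed.

Lemma orthogonal_sub_rowspace (F : fieldType) p q r (A : 'M[F]_(p, q)) (B : 'M[F]_(r, q)) :
  A *m B^T = 0 -> (q <= \rank A + \rank B)%N ->
  forall w : 'rV_q, w *m B^T = 0 -> exists x, w = x *m A.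
Proof.
move=> AB0 rankAB w wB0.
have sA : (A <= kermx B^T)%MS by apply/sub_kermxP.
have sK : (kermx B^T <= A)%MS.
  by rewrite -(mxrank_leqif_sup sA).2 eqn_leq mxrankS //= mxrank_ker mxrank_tr; lia.
by apply/submxP; apply: submx_trans sK; apply/sub_kermxP.
Qed.

Section Laplacian.
Variables (R : realFieldType) (n : nat).

Definition laplacian (w : 'I_n -> 'I_n -> R) : 'M[R]_n :=
  \matrix_(i, j) ((i == j)%:R * \sum_k w i k - w i j).

Lemma laplacian_formE (w : 'I_n -> 'I_n -> R) (x : 'cV[R]_n) :
  (x^T *m laplacian w *m x) 0 0 = \sum_i \sum_j w i j * (x i 0 ^+ 2 - x i 0 * x j 0).
Proof.
rewrite mxE; under eq_bigr do rewrite mxE big_distrl /=.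
rewrite exchange_big /=; apply: eq_bigr => i _.
under eq_bigr do rewrite !mxE mulrBr mulrBl.
rewrite sumrB (bigD1 i) //= eqxx mul1r [X in _ + X - _]big1 => [|j ji]; last first.
  by rewrite eq_sym (negbTE ji) mul0r mulr0 mul0r.
rewrite addr0 mulr_sumr mulr_suml -sumrB; apply: eq_bigr => j _; ring.
Qed.

Lemma laplacian_form_ge0 (w : 'I_n -> 'I_n -> R) (x : 'cV[R]_n) :
  (forall i j, w i j = w j i) -> (forall i j, 0 <= w i j) ->
  0 <= (x^T *m laplacian w *m x) 0 0.
Proof.
move=> w_sym w_ge0.
have swap : \sum_i \sum_j w i j * (x i 0 ^+ 2 - x i 0 * x j 0) =
            \sum_i \sum_j w i j * (x j 0 ^+ 2 - x i 0 * x j 0).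
  rewrite exchange_big; apply: eq_bigr => i _; apply: eq_bigr => j _.
  by rewrite w_sym [x j 0 * _]mulrC.
have twiceE : (x^T *m laplacian w *m x) 0 0 *+ 2 =
              \sum_i \sum_j w i j * (x i 0 - x j 0) ^+ 2.
  rewrite laplacian_formE mulr2n {2}swap -big_split; apply: eq_bigr => i _.
  by rewrite -big_split; apply: eq_bigr => j _ /=; ring.
rewrite -(pmulrn_lge0 _ (isT : 0 < 2)%N) twiceE.
by apply: sumr_ge0 => i _; apply: sumr_ge0 => j _; rewrite mulr_ge0 ?sqr_ge0.
Qed.

End Laplacian.

Section PlaneGraph.
Variables (n c : nat) (adj : rel 'I_n) (rot : 'I_n -> 'I_n -> 'I_n).
Variable lab : 'I_n * 'I_n -> option 'I_c.
Hypothesis hG : plane_graph adj rot lab.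

Let adj_sym : symmetric adj := hG.1.
Let adj_irr : irreflexive adj := hG.2.1.
Let adj_connect : forall u v, connect adj u v := hG.2.2.1.
Let edge_cycle : forall {u v}, adj u v -> edge_on_cycle adj u v := hG.2.2.2.1.
Let rot_adj : forall {v u}, adj v u -> adj v (rot v u) := hG.2.2.2.2.1.
Let rot_transitive : forall {v u w}, adj v u -> adj v w -> fconnect (rot v) u w :=
  hG.2.2.2.2.2.1.
Let lab_orbit : forall d d', dart adj d -> dart adj d' ->
  (lab d == lab d') = fconnect (fperm rot) d d' := hG.2.2.2.2.2.2.1.
Let lab_onto : forall o, exists2 d, dart adj d & lab d = o := hG.2.2.2.2.2.2.2.1.
Let euler : c + n = (medges adj).+1 := hG.2.2.2.2.2.2.2.2.

Local Notation rev := (@Defs.rev n).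

Lemma revK : involutive rev. Proof. by case. Qed.

Lemma dart_rev d : dart adj (rev d) = dart adj d.
Proof. by case: d => a b; rewrite /dart /= adj_sym. Qed.

Lemma dart_neq d : dart adj d -> d.1 != d.2.
Proof. by case: d => a b; apply: contraTneq => /= ->; rewrite /dart /= adj_irr. Qed.

Lemma lab_rev_rot i j : adj i j -> lab (j, i) = lab (i, rot i j).
Proof.
move=> hij; have hji : dart adj (j, i) by rewrite /dart /= adj_sym.
apply/eqP; rewrite lab_orbit //; first exact: fconnect1.
exact: rot_adj.
Qed.

Lemma iter_rot_adj i j k : adj i j -> adj i (iter k (rot i) j).
Proof. by move=> hij; elim: k => //= k; apply: rot_adj. Qed.

Lemma rot_onto i : rot i @: [set j | adj i j] = [set j | adj i j].
Proof.
apply/setP => w; rewrite inE; apply/idP/idP => [/imsetP[j] | hiw].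
  by rewrite inE => hij ->; apply: rot_adj.
have /iter_findex <- := rot_transitive (rot_adj hiw) hiw.
by rewrite -iterSr iterS imset_f // inE iter_rot_adj.
Qed.

Lemma sum_rot (V : nmodType) i (F : 'I_n -> V) :
  \sum_(j | adj i j) F (rot i j) = \sum_(j | adj i j) F j.
Proof.
have rot_inj : {in [set j | adj i j] &, injective (rot i)}.
  by apply/imset_injP; rewrite rot_onto.
have nbrE (G : 'I_n -> V) : \sum_(j | adj i j) G j = \sum_(j in [set j | adj i j]) G j.
  by apply: eq_bigl => j; rewrite inE.
by rewrite !nbrE -[in RHS]rot_onto big_imset.
Qed.

Lemma sum_lab_rev (V : nmodType) i (G : option 'I_c -> V) :
  \sum_(j | adj i j) G (lab (j, i)) = \sum_(j | adj i j) G (lab (i, j)).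
Proof.
rewrite -(sum_rot i (fun j => G (lab (i, j)))).
by apply: eq_bigr => j hij; rewrite (lab_rev_rot hij).
Qed.

(* Rotating around a vertex crosses its incident edges one at a time, and the
   graph is connected, so S spreads from the unbounded face to every face. *)
Lemma dual_connected (S : option 'I_c -> Prop) : S None ->
  (forall d, dart adj d -> S (lab d) -> S (lab (rev d))) -> forall o, S o.
Proof.
move=> S0 S_cross.
pose P i := forall j, adj i j -> S (lab (i, j)).
have P_rot i j : adj i j -> S (lab (i, j)) -> P i.
  move=> hij Sij w hiw; have /iter_findex <- := rot_transitive hij hiw.
  elim: (findex _ _ _) => //= k IHk.
  rewrite -lab_rev_rot ?iter_rot_adj //; apply: (S_cross (i, _)) IHk.
  by rewrite /dart /= iter_rot_adj.
have [[a b] hab lab_ab] := lab_onto None.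
have Pall v : P v.
  apply: connect_ind (adj_connect a v) _ => [x y hxy Px|]; last first.
    by apply: (P_rot a b) => //; rewrite lab_ab.
  by apply: (P_rot y x); rewrite 1?adj_sym //; apply: (S_cross (x, y)) (Px _ hxy).
by move=> o; have [[i j] hij <-] := lab_onto o; apply: Pall.
Qed.

Definition edges : {set 'I_n * 'I_n} := [set d | dart adj d & (d.1 < d.2)%N].
Local Notation m := #|edges|.
Definition edge (j : 'I_m) : 'I_n * 'I_n := enum_val j.

Lemma sum_darts (V : nmodType) (F : 'I_n * 'I_n -> V) :
  \sum_(d | dart adj d) F d = \sum_(e in edges) (F e + F (rev e)).
Proof.
rewrite big_split /= (bigID (fun d : 'I_n * 'I_n => d.1 < d.2)%N) /=; congr (_ + _).
  by apply: eq_bigl => d; rewrite inE.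
rewrite (reindex_inj (can_inj revK)); apply: eq_bigl => -[a b]; rewrite inE dart_rev /=.
case hab: (dart adj (a, b)) => //=; rewrite -leqNgt leq_eqVlt.
by move: (dart_neq hab); rewrite -val_eqE /= => /negbTE ->.
Qed.

Lemma medges_card : medges adj = m.
Proof.
rewrite /medges -sum1_card (eq_bigl (dart adj)) => [|d]; last by rewrite inE.
by rewrite sum_darts sum_nat_const mulnK.
Qed.

Lemma edge_dart j : dart adj (edge j).
Proof. by have := enum_valP j; rewrite inE => /andP[]. Qed.

Lemma sum_edge (V : nmodType) (F : 'I_n * 'I_n -> V) :
  \sum_(j < m) F (edge j) = \sum_(e in edges) F e.
Proof. by rewrite [RHS]big_enum_val. Qed.

Lemma dart_edge d : dart adj d -> exists j, edge j = d \/ edge j = rev d.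
Proof.
move=> hd; have [de | de] : d \in edges \/ rev d \in edges.
- rewrite !inE dart_rev hd /=; case: d hd => a b hab /=.
  case: ltngtP; [by left | by right |].
  by move=> /val_inj eab; move: (dart_neq hab); rewrite eab eqxx.
- by exists (enum_rank_in de d); left; rewrite /edge enum_rankK_in.
- by exists (enum_rank_in de (rev d)); right; rewrite /edge enum_rankK_in.
Qed.

Lemma adj_constant (T : Type) (f : 'I_n -> T) :
  (forall i j, adj i j -> f i = f j) -> forall i j, f i = f j.
Proof.
move=> hf i j; apply: (connect_ind (P := fun y => f i = f y) _ (adj_connect i j)) => //.
by move=> x y /hf <-.
Qed.

Definition antisym (V : zmodType) (w : 'I_n * 'I_n -> V) :=
  forall d, dart adj d -> w (rev d) = - w d.

Definition circulation (V : nmodType) (w : 'I_n * 'I_n -> V) (k : 'I_c) : V :=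
  \sum_(d | dart adj d && (lab d == Some k)) w d.

Definition divergence (V : nmodType) (w : 'I_n * 'I_n -> V) (i : 'I_n) : V :=
  \sum_(j | adj i j) w (i, j).

Definition coboundary (V : zmodType) (th : 'I_n -> V) (d : 'I_n * 'I_n) : V :=
  th d.1 - th d.2.

Definition face_pot (V : zmodType) (v : 'I_c -> V) (o : option 'I_c) : V :=
  if o is Some k then v k else 0.

Definition face_diff (V : zmodType) (v : 'I_c -> V) (d : 'I_n * 'I_n) : V :=
  face_pot v (lab d) - face_pot v (lab (rev d)).

Lemma coboundary_antisym (V : zmodType) (th : 'I_n -> V) : antisym (coboundary th).
Proof. by move=> -[a b] _; rewrite /coboundary opprB. Qed.

Lemma face_diff_antisym (V : zmodType) (v : 'I_c -> V) : antisym (face_diff v).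
Proof. by move=> d _; rewrite /face_diff revK opprB. Qed.

Lemma divergence_face_diff (V : zmodType) (v : 'I_c -> V) i :
  divergence (face_diff v) i = 0.
Proof. by rewrite /divergence sumrB (sum_lab_rev i (face_pot v)) subrr. Qed.

Lemma face_diff_inj (V : zmodType) (v v' : 'I_c -> V) :
  (forall d, dart adj d -> face_diff v d = face_diff v' d) -> v = v'.
Proof.
move=> eq_diff; have eq_pot : forall o, face_pot v o = face_pot v' o.
  apply: dual_connected => // d hd eq_d.
  by move: (eq_diff d hd); rewrite /face_diff eq_d => /addrI /oppr_inj.
by apply/funext => k; apply: (eq_pot (Some k)).
Qed.

Lemma circulation_indicator (V : pzRingType) a k : dart adj a ->
  circulation (fun d => (d == a)%:R : V) k = (lab a == Some k)%:R.
Proof.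
move=> ha; rewrite /circulation big_mkcond (bigD1 a) //= ha eqxx /=.
rewrite big1 ?addr0 => [|d da]; first by case: (lab a == Some k).
by rewrite (negbTE da); case: ifP.
Qed.

Section Homology.
Context {F : fieldType}.

Definition cochain (w : 'I_n * 'I_n -> F) : 'rV[F]_m := \row_j w (edge j).

Definition incidence : 'M[F]_(n, m) :=
  \matrix_(i, j) coboundary (fun v => (v == i)%:R) (edge j).

Definition face_incidence : 'M[F]_(c, m) :=
  \matrix_(k, j) face_diff (fun l => (l == k)%:R) (edge j).

Lemma cochain_inj w w' : antisym w -> antisym w' -> cochain w = cochain w' ->
  forall d, dart adj d -> w d = w' d.
Proof.
move=> hw hw' /rowP eq_ww' d hd; have [j [<- | ej]] := dart_edge hd.
  by have := eq_ww' j; rewrite !mxE.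
have := eq_ww' j; rewrite !mxE => ejw.
by rewrite -[d]revK -ej hw ?hw' ?edge_dart // ejw.
Qed.

Lemma cochain_eq0 w : antisym w -> cochain w = 0 -> forall d, dart adj d -> w d = 0.
Proof.
move=> hw w0; apply: (cochain_inj hw (w' := fun=> 0)) => [d _|]; first by rewrite oppr0.
by rewrite w0; apply/rowP => j; rewrite !mxE.
Qed.

Lemma sum_edges_antisym w (g : 'I_n * 'I_n -> F) : antisym w ->
  \sum_(j < m) w (edge j) * (g (edge j) - g (rev (edge j))) =
  \sum_(d | dart adj d) w d * g d.
Proof.
move=> hw; rewrite sum_darts -sum_edge; apply: eq_bigr => j _.
by rewrite hw ?edge_dart // mulNr mulrBr.
Qed.

Lemma mul_incidence (th : 'rV[F]_n) :
  th *m incidence = cochain (coboundary (fun i => th 0 i)).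
Proof.
apply/rowP => j; rewrite !mxE; under eq_bigr do rewrite mxE /coboundary mulrBr.
by rewrite sumrB !sum_mul_indicator.
Qed.

Lemma face_potE (v : 'I_c -> F) o :
  \sum_k v k * face_pot (fun l => (l == k)%:R) o = face_pot v o.
Proof.
case: o => [l|] /=; first exact: sum_mul_indicator.
by rewrite big1 // => k _; rewrite mulr0.
Qed.

Lemma mul_face_incidence (v : 'rV[F]_c) :
  v *m face_incidence = cochain (face_diff (fun k => v 0 k)).
Proof.
apply/rowP => j; rewrite !mxE; under eq_bigr do rewrite mxE /face_diff mulrBr.
by rewrite sumrB !face_potE.
Qed.

Lemma sum_darts_fst (V : nmodType) i (f : 'I_n * 'I_n -> V) :
  \sum_(d | dart adj d && (d.1 == i)) f d = \sum_(j | adj i j) f (i, j).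
Proof.
rewrite -[RHS](big_pred1_eq +%R i (fun a => \sum_(j | adj i j) f (a, j))) pair_big_dep /=.
by apply: eq_big => [[a b] | [a b] _] //=; rewrite /dart /= andbC; case: eqP => // ->.
Qed.

Lemma cochain_mul_tr_incidence w : antisym w ->
  cochain w *m incidence^T = \row_i divergence w i.
Proof.
move=> hw; apply/rowP => i; rewrite !mxE.
pose g (d : 'I_n * 'I_n) := (d.1 == i)%:R : F.
rewrite (eq_bigr (fun j => w (edge j) * (g (edge j) - g (rev (edge j))))).
  by rewrite sum_edges_antisym // sum_mul_bool sum_darts_fst.
by move=> j _; rewrite !mxE.
Qed.

Lemma cochain_mul_tr_face_incidence w : antisym w ->
  cochain w *m face_incidence^T = \row_k circulation w k.
Proof.
move=> hw; apply/rowP => k; rewrite !mxE.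
pose g d := face_pot (fun l => (l == k)%:R) (lab d) : F.
rewrite (eq_bigr (fun j => w (edge j) * (g (edge j) - g (rev (edge j))))).
  rewrite sum_edges_antisym // (eq_bigr (fun d => w d * (lab d == Some k)%:R)).
    by rewrite sum_mul_bool.
  by move=> d _; rewrite /g; case: (lab d).
by move=> j _; rewrite !mxE.
Qed.

Lemma face_incidence_mul_tr : face_incidence *m incidence^T = 0.
Proof.
apply/row_matrixP => k; rewrite row_mul row0 rowE mul_face_incidence.
rewrite cochain_mul_tr_incidence; last exact: face_diff_antisym.
by apply/rowP => i; rewrite !mxE divergence_face_diff.
Qed.

Lemma incidence_mul_tr : incidence *m face_incidence^T = 0.
Proof. by rewrite -[incidence]trmxK -trmx_mul face_incidence_mul_tr trmx0. Qed.

Lemma rank_incidence : (n - 1 <= \rank (incidence : 'M[F]_(n, m)))%N.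
Proof.
have [[i0 _] _ _] := lab_onto None.
have ker1 (v : 'rV[F]_n) : v *m incidence = 0 -> (v <= (const_mx 1 : 'rV_n))%MS.
  rewrite mul_incidence => /(cochain_eq0 (coboundary_antisym _)) cob0.
  suff -> : v = v 0 i0 *: const_mx 1 by exact: scalemx_sub (submx_refl _).
  apply/rowP => i; rewrite !mxE mulr1; apply: adj_constant => a b hab.
  by apply/eqP; rewrite -subr_eq0; apply/eqP/(cob0 (a, b)).
exact: leq_trans (leq_sub2l _ (rank_leq_row _)) (mxrank_ker_sub ker1).
Qed.

Lemma rank_face_incidence : (c <= \rank (face_incidence : 'M[F]_(c, m)))%N.
Proof.
have ker0 (v : 'rV[F]_c) : v *m face_incidence = 0 -> (v <= (0 : 'rV_c))%MS.
  rewrite mul_face_incidence => /(cochain_eq0 (face_diff_antisym _)) diff0.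
  have v0 : (fun k => v 0 k) = fun=> 0.
    apply: face_diff_inj => d hd; rewrite diff0 // /face_diff.
    by case: (lab d); case: (lab (rev d)); rewrite /= subrr.
  suff -> : v = 0 by rewrite submx_refl.
  by apply/rowP => k; have := congr1 (@^~ k) v0; rewrite mxE.
by have := mxrank_ker_sub ker0; rewrite mxrank0 subn0.
Qed.

Lemma ranks_complementary :
  (m <= \rank (incidence : 'M[F]_(n, m)) + \rank (face_incidence : 'M[F]_(c, m)))%N.
Proof.
by have := rank_incidence; have := rank_face_incidence; move: euler; rewrite medges_card; lia.
Qed.

Lemma coboundary_of_circulation0 w : antisym w -> (forall k, circulation w k = 0) ->
  exists th : 'I_n -> F, forall d, dart adj d -> w d = coboundary th d.
Proof.
move=> hw circ0.
have : cochain w *m face_incidence^T = 0.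
  by rewrite cochain_mul_tr_face_incidence //; apply/rowP => k; rewrite !mxE circ0.
case/(orthogonal_sub_rowspace incidence_mul_tr ranks_complementary) => th.
rewrite mul_incidence => /(cochain_inj hw (coboundary_antisym _)) eq_w.
by exists (fun i => th 0 i).
Qed.

Lemma face_diff_of_divergence0 w : antisym w -> (forall i, divergence w i = 0) ->
  exists v : 'I_c -> F, forall d, dart adj d -> w d = face_diff v d.
Proof.
move=> hw div0.
have : cochain w *m incidence^T = 0.
  by rewrite cochain_mul_tr_incidence //; apply/rowP => i; rewrite !mxE div0.
have ranks := ranks_complementary; rewrite addnC in ranks.
case/(orthogonal_sub_rowspace face_incidence_mul_tr ranks) => v.
rewrite mul_face_incidence => /(cochain_inj hw (face_diff_antisym _)) eq_w.
by exists (fun k => v 0 k).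
Qed.

End Homology.

(* An edge on a cycle is no bridge: otherwise the cochain [d] - [rev d] has zero
   circulations, hence is the coboundary of a potential that jumps by 1 across
   the edge but is constant along the rest of the cycle. *)
Lemma lab_rev_neq d : dart adj d -> lab (rev d) != lab d.
Proof.
case: d => a b hab; apply/negP => /eqP lab_eq.
pose w x : rat := (x == (a, b))%:R - (x == (b, a))%:R.
have hw : antisym w.
  move=> x _; rewrite /w -[(b, a)]/(rev (a, b)) -{1}[(a, b)]revK.
  by rewrite !(inj_eq (can_inj revK)) opprB.
have circ0 k : circulation w k = 0.
  have hba : dart adj (b, a) by rewrite -dart_rev.
  rewrite /circulation sumrB -!/(circulation _ k).
  by rewrite (circulation_indicator rat k hab) (circulation_indicator rat k hba) -lab_eq subrr.
have [th hth] := coboundary_of_circulation0 hw circ0.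
have flat x y : adj x y -> [set x; y] != [set a; b] -> th x = th y.
  move=> hxy hset; apply/eqP; rewrite -subr_eq0; move: (hth (x, y) hxy).
  rewrite /coboundary /w /= => <-.
  have /negbTE-> : (x, y) != (a, b) by apply: contraNneq hset => -[-> ->].
  have /negbTE-> : (x, y) != (b, a) by apply: contraNneq hset => -[-> ->]; rewrite finset.setUC.
  by rewrite subrr.
have th_ab : th a = th b.
  apply: (connect_ind (P := fun z => th z = th b) _ (edge_cycle hab)) => // x y.
  by move=> /andP[hxy hset] <-; apply/esym/flat.
move: (hth _ hab); rewrite /coboundary /w /= th_ab subrr eqxx xpair_eqE.
by rewrite (negbTE (dart_neq hab)) subr0 => /eqP; rewrite oner_eq0.
Qed.

Lemma int_cochain_of_circulation (q : 'I_c -> int) :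
  exists z : 'I_n * 'I_n -> int, antisym z /\ forall k, circulation z k = q k.
Proof.
have face_unit : forall o, exists z : 'I_n * 'I_n -> int,
    antisym z /\ forall k, circulation z k = (o == Some k)%:R.
  apply: dual_connected => [|d hd [z [hz circ_z]]].
    by exists (fun=> 0); split => [d _|k]; rewrite ?oppr0 // /circulation big1.
  exists (fun x => z x + ((x == rev d)%:R - (x == d)%:R)); split.
    by move=> x hx; rewrite hz // -{2}[d]revK !(inj_eq (can_inj revK)) opprD opprB.
  move=> k; rewrite /circulation big_split sumrB /= -!/(circulation _ k) circ_z.
  by rewrite !circulation_indicator ?dart_rev // addrC subrK.
have [zs hzs] := choice (fun k => face_unit (Some k)).
exists (fun x => \sum_k q k * zs k x); split.
  by move=> d hd; rewrite -sumrN; apply: eq_bigr => k _; rewrite (hzs k).1 // mulrN.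
move=> k; rewrite /circulation exchange_big /=.
under eq_bigr do rewrite -mulr_sumr -/(circulation _ _) (hzs _).2.
under eq_bigr do rewrite (inj_eq (@Some_inj _)) eq_sym.
exact: sum_mul_indicator.
Qed.

Section Kuramoto.
Variable R : realType.
Implicit Types (K : R) (eps : 'I_c -> R) (th : 'I_n -> R).

Lemma delta_face_diff eps k d :
  lab d = Some k -> delta lab eps k d = asin (face_diff eps d).
Proof. by move=> hk; rewrite /delta /face_diff hk; case: (lab (rev d)) => //=; rewrite subr0. Qed.

Lemma in_DGP eps :
  in_DG adj lab eps <-> forall d, dart adj d -> `|face_diff eps d| <= 1.
Proof.
split=> [[out_le1 between_le1] d hd | bound]; last first.
  split=> [k | k l _]; rewrite card_gt0 => /set0Pn[d];
    rewrite inE => /andP[/andP[hd /eqP hk] /eqP hl]; move: (bound d hd);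
    by rewrite /face_diff hk hl ?subr0.
rewrite /face_diff; case hk: (lab d) => [k|]; case hl: (lab (rev d)) => [l|] /=.
- have [<- | kl] := eqVneq k l; first by rewrite subrr normr0 ler01.
  apply: between_le1 kl _; rewrite card_gt0; apply/set0Pn; exists d.
  by rewrite inE hd hk hl !eqxx.
- rewrite subr0; apply: out_le1; rewrite card_gt0; apply/set0Pn; exists d.
  by rewrite inE hd hk hl !eqxx.
- rewrite sub0r normrN; apply: out_le1; rewrite card_gt0; apply/set0Pn; exists (rev d).
  by rewrite inE dart_rev hd hl revK hk !eqxx.
- by rewrite subrr normr0 ler01.
Qed.

Lemma circulation_asin eps k :
  circulation (fun d => asin (face_diff eps d)) k = A_k adj lab eps k.
Proof.
rewrite /circulation (eq_bigr (fun d => asin (eps k) * (lab (rev d) == None)%:R +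
    \sum_(l | l != k) asin (eps k - eps l) * (lab (rev d) == Some l)%:R)); last first.
  move=> d /andP[_ /eqP hk]; rewrite /face_diff hk /=.
  case: (lab (rev d)) => [l|] /=; last by rewrite mulr1 subr0 big1 ?addr0 // => l _; rewrite mulr0.
  rewrite mulr0 add0r; under eq_bigr do rewrite (inj_eq (@Some_inj _)).
  rewrite sum_mul_bool; have [<- | lk] := eqVneq l k.
    by rewrite subrr asin0 big_pred0 // => l'; rewrite [l == _]eq_sym andNb.
  rewrite (big_pred1 l) // => l' /=.
  by rewrite [l == l']eq_sym; case: (eqVneq l' l) => [->|_]; rewrite ?lk ?andbF.
rewrite big_split /= sum_mul_count exchange_big /=.
by congr (_ + _); apply: eq_bigr => l _; rewrite sum_mul_count mulrC.
Qed.

Lemma realizesP eps th : in_DG adj lab eps ->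
  realizes adj lab eps th <->
  forall d, dart adj d -> Delta th d.1 d.2 = asin (face_diff eps d).
Proof.
move=> /in_DGP bound; split=> [real d hd | real d k hd hk]; last first.
  by rewrite delta_face_diff // real.
case hk: (lab d) => [k|]; first by rewrite (real d k hd hk) delta_face_diff.
have : lab (rev d) != None by rewrite -hk lab_rev_neq.
case hl: (lab (rev d)) => [l|] // _.
have hrd : dart adj (rev d) by rewrite dart_rev.
have := real _ l hrd hl; rewrite delta_face_diff // face_diff_antisym // asinN ?bound //.
have /andP[lo hi] := asin_bound (bound d hd); have pi_gt0 := pi_gt0 R.
rewrite /Delta /= => eq_rd; rewrite -opprB wrapN eq_rd ?opprK //.
by apply/andP; split; lra.
Qed.

Lemma stab_matrixE K th : stab_matrix adj K th =
  - laplacian (fun i j => if adj i j then K * cos (th i - th j) else 0).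
Proof.
apply/matrixP => i j; rewrite !mxE; case: (eqVneq i j) => [<- | ij].
  by rewrite adj_irr mul1r subr0 big_mkcond.
by rewrite mul0r sub0r opprK.
Qed.

Lemma small_angles_neg_semidef K th : 0 <= K -> small_angles adj th ->
  neg_semidef (stab_matrix adj K th).
Proof.
move=> K_ge0 small x; rewrite stab_matrixE mulmxN mulNmx mxE oppr_le0.
apply: laplacian_form_ge0 => i j.
  by rewrite adj_sym; case: ifP => // _; rewrite -opprB cosN.
case: ifP => // hij; rewrite mulr_ge0 // -cos_wrap; apply: cos_ge0_pihalf.
by rewrite -ler_norml; apply: small.
Qed.

Lemma realization_exists q eps : Qset adj lab q eps ->
  exists th, forall d, dart adj d -> Delta th d.1 d.2 = asin (face_diff eps d).
Proof.
move=> [/in_DGP bound A_q]; have [z [hz circ_z]] := int_cochain_of_circulation q.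
pose om d := asin (face_diff eps d) - 2 * pi * (z d)%:~R.
have hom : antisym om.
  move=> d hd; rewrite /om face_diff_antisym // asinN ?bound // hz // rmorphN /=.
  by rewrite mulrN opprK opprB addrC.
have circ0 k : circulation om k = 0.
  rewrite /circulation sumrB -mulr_sumr -rmorph_sum /= -!/(circulation _ k).
  by rewrite circulation_asin A_q circ_z subrr.
have [th hth] := coboundary_of_circulation0 hom circ0.
exists th => d hd; rewrite /Delta -/(coboundary th d) -hth // /om -mulrN -rmorphN.
have /andP[lo hi] := asin_bound (bound d hd); have pi_gt0 := pi_gt0 R.
by rewrite wrapD2piz wrap_id //; apply/andP; split; lra.
Qed.

Lemma config_equiv_of_Delta th th' :
  (forall d, dart adj d -> Delta th d.1 d.2 = Delta th' d.1 d.2) -> config_equiv th th'.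
Proof.
move=> eq_Delta; have [[i0 _] _ _] := lab_onto None.
pose P v := exists z : int, th' v - th v - (th' i0 - th i0) = 2 * pi * z%:~R.
have Pall v : P v.
  apply: (connect_ind (P := P) _ (adj_connect i0 v)) => [x y hxy [z ez]|]; last first.
    by exists 0; rewrite subrr mulr0.
  have [z1 ez1] := eq_wrap (eq_Delta (x, y) hxy).
  by exists (z + z1); rewrite rmorphD /= mulrDr -ez -ez1 /=; ring.
have [z hz] := choice Pall.
by exists (th' i0 - th i0), z => i; move: (hz i); lra.
Qed.

Lemma Qset_stable_realization K q eps : 0 < K -> Qset adj lab q eps ->
  exists th, [/\ realizes adj lab eps th, stable_fp adj K th,
                 small_angles adj th & has_winding adj lab th q].
Proof.
move=> K_gt0 hQ; have [th real] := realization_exists hQ.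
have /in_DGP bound := hQ.1.
have small : small_angles adj th.
  by move=> i j hij; move: (real (i, j) hij) => /= ->; rewrite ler_norml asin_bound ?bound.
exists th; split => //.
- exact/(realizesP th hQ.1).
- split; last exact: small_angles_neg_semidef (ltW K_gt0) small.
  move=> i; rewrite -[RHS](divergence_face_diff eps i); apply: eq_bigr => j hij.
  by move: (real (i, j) hij) => /= /(congr1 sin); rewrite sin_wrap asinK_norm ?bound.
- move=> k; rewrite -hQ.2 -circulation_asin; apply: eq_bigr => d /andP[hd _].
  exact: real.
Qed.

Lemma realization_unique eps th th' : in_DG adj lab eps ->
  realizes adj lab eps th -> realizes adj lab eps th' -> config_equiv th th'.
Proof.
move=> hD /(realizesP _ hD) real /(realizesP _ hD) real'.
by apply: config_equiv_of_Delta => d hd; rewrite real // real'.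
Qed.

Lemma realization_inj eps eps' th th' : in_DG adj lab eps -> in_DG adj lab eps' ->
  realizes adj lab eps th -> realizes adj lab eps' th' -> config_equiv th th' -> eps = eps'.
Proof.
move=> hD hD' /(realizesP _ hD) real /(realizesP _ hD') real' equiv.
apply: face_diff_inj => d hd; apply: asin_inj_norm.
- exact: (in_DGP _).1 hD _ hd.
- exact: (in_DGP _).1 hD' _ hd.
by rewrite -real // -real' // (Delta_config_equiv equiv).
Qed.

Lemma small_angles_fp_realization q th : fixed_point adj th -> small_angles adj th ->
  has_winding adj lab th q -> exists2 eps, Qset adj lab q eps & realizes adj lab eps th.
Proof.
move=> fixed small winding.
pose s d := sin (coboundary th d).
have hs : antisym s by move=> d _; rewrite /s /coboundary /= -opprB sinN.
have [eps heps] := face_diff_of_divergence0 hs fixed.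
have Delta_asin d : dart adj d -> Delta th d.1 d.2 = asin (face_diff eps d).
  move=> hd; rewrite -heps // /s /coboundary -sin_wrap sinK // in_itv /= -ler_norml.
  exact: small.
have hD : in_DG adj lab eps by apply/in_DGP => d hd; rewrite -heps // sin_max.
exists eps; last exact/(realizesP th hD).
split=> // k; rewrite -circulation_asin -(winding k); apply: eq_bigr => d /andP[hd _].
by rewrite Delta_asin.
Qed.

End Kuramoto.
End PlaneGraph.

Theorem proposition1 (R : realType) (n c : nat) (adj : rel 'I_n)
    (rot : 'I_n -> 'I_n -> 'I_n) (lab : 'I_n * 'I_n -> option 'I_c)
    (hG : plane_graph adj rot lab) (K : R) (hK : 0 < K) (q : 'I_c -> int) :
  (* for every eps in Q(q): existence and uniqueness of the configuration,
     which is a stable fixed point with small angles and winding vector q *)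
  (forall eps : 'I_c -> R, Qset adj lab q eps ->
     (exists theta : 'I_n -> R,
        [/\ realizes adj lab eps theta, stable_fp adj K theta,
            small_angles adj theta & has_winding adj lab theta q]) /\
     (forall theta theta' : 'I_n -> R,
        realizes adj lab eps theta -> realizes adj lab eps theta' ->
        config_equiv theta theta')) /\
  (* the induced map on equivalence classes is injective *)
  (forall (eps eps' : 'I_c -> R) (theta theta' : 'I_n -> R),
     Qset adj lab q eps -> Qset adj lab q eps' ->
     realizes adj lab eps theta -> realizes adj lab eps' theta' ->
     config_equiv theta theta' -> eps = eps') /\
  (* ... and surjective *)
  (forall theta : 'I_n -> R,
     stable_fp adj K theta -> small_angles adj theta ->
     has_winding adj lab theta q ->
     exists2 eps : 'I_c -> R, Qset adj lab q eps & realizes adj lab eps theta).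
Proof.
split; [move=> eps hQ; split | split].
- exact (Qset_stable_realization hG hK hQ).
- by move=> th th'; exact (realization_unique hG hQ.1).
- by move=> eps eps' th th' hQ hQ'; exact (realization_inj hG hQ.1 hQ'.1).
- by move=> th [fixed _]; exact (small_angles_fp_realization hG fixed).
Qed.
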